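(* Let $P$ be a finite nonempty set of points lying in a single quadrant $Q$ with respect to the origin $s$, and let $e\ne s$ be such that the line $\overline{se}$ is in the quadrant $Q$ but lies outside the two bounding lines, i.e. $\theta_{s,e}>\theta_{ub}$ or $\theta_{s,e}<\theta_{lb}$. Then, with $d^{\max}=\max_{p\in P} d(p,\overline{se})$, $$d^{\max} \ge \max\Big\{ \min\{d(l_1,\overline{se}),d(l_2,\overline{se})\},\ \min\{d(u_1,\overline{se}),d(u_2,\overline{se})\},\ D\Big\},$$ where $D = d(c_n,\overline{se})$ if $d(s,e) < d(s,c_f)$ and $D = d(c_f,\overline{se})$ if $d(s,e)\ge d(s,c_f)$; and $$d^{\max} \le \max\{ d(l_1,\overline{se}),d(l_2,\overline{se}),d(u_1,\overline{se}),d(u_2,\overline{se}),\ d(c_f,\overline{se})\}.$$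
   Context: Bounded Quadrant System (BQS) setup. Points are in the plane with UTM-projected $x$ and $y$ axes, and the start point $s$ is taken as the origin. For a point $p\ne s$, $\theta(p)\in[0,2\pi)$ is the angle between the positive $x$ axis and the vector from $s$ to $p$; $\theta_{s,e}=\theta(e)$. The four quadrants are $Q_k=\{p\neq s: (k-1)\pi/2 \le \theta(p) < k\pi/2\}$, $k=1,\dots,4$; quadrant $Q_k$ has angle range $[\theta^Q_{start},\theta^Q_{end}) = [(k-1)\pi/2,k\pi/2)$. A line $\overline{se}$ is ''in'' quadrant $Q$ if $\theta^Q_{start}\le \theta_{s,e}<\theta^Q_{end}$. For a finite nonempty $P\subset Q$: the bounding box is the smallest closed axis-parallel rectangle containing $P$, with corners $c_1,\dots,c_4$; $c_n$ and $c_f$ are the corners of the box nearest to and farthest from the origin $s$ (e.g. in the first quadrant $c_n=(x_{\min},y_{\min})$, $c_f=(x_{\max},y_{\max})$). $\theta_{lb}=\min_{p\in P}\theta(p)$ and $\theta_{ub}=\max_{p\in P}\theta(p)$; the lower (resp. upper) bounding line is the ray from $s$ at angle $\theta_{lb}$ (resp. $\theta_{ub}$). $l_1,l_2$ are the intersection points of the lower bounding line with the boundary of the bounding box and $u_1,u_2$ those of the upper bounding line, with index 1 the intersection nearer to $s$ (they may coincide). $d(p,\overline{se})$ is the Euclidean distance from the point $p$ to the line segment from $s$ to $e$. *)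

From Stdlib Require Import Reals Lra List.
Import ListNotations.
Open Scope R_scope.

(* Points of the plane; the start point s is the origin (0,0). *)
Definition pt := (R * R)%type.
Definition origin : pt := (0, 0).

Definition norm (p : pt) : R := sqrt (fst p * fst p + snd p * snd p).

Definition theta (p : pt) : R :=
  let r := norm p in
  if Rle_dec 0 (snd p) then acos (fst p / r) else 2 * PI - acos (fst p / r).

Definition in_quadrant (k : nat) (p : pt) : Prop :=
  p <> origin /\ INR (k - 1) * PI / 2 <= theta p < INR k * PI / 2.

Definition dist_seg (p e : pt) : R :=
  let t := Rmax 0 (Rmin 1 ((fst p * fst e + snd p * snd e) /
                           (fst e * fst e + snd e * snd e))) in
  norm (fst p - t * fst e, snd p - t * snd e).

Definition lmin (f : pt -> R) (l : list pt) : R :=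
  match l with nil => 0 | p :: l' => fold_right (fun q a => Rmin (f q) a) (f p) l' end.
Definition lmax (f : pt -> R) (l : list pt) : R :=
  match l with nil => 0 | p :: l' => fold_right (fun q a => Rmax (f q) a) (f p) l' end.

Definition xmin (P : list pt) := lmin fst P.
Definition xmax (P : list pt) := lmax fst P.
Definition ymin (P : list pt) := lmin snd P.
Definition ymax (P : list pt) := lmax snd P.

Definition in_box (P : list pt) (q : pt) : Prop :=
  xmin P <= fst q <= xmax P /\ ymin P <= snd q <= ymax P.

Definition c_near (k : nat) (P : list pt) : pt :=
  match k with
  | 1%nat => (xmin P, ymin P)
  | 2%nat => (xmax P, ymin P)
  | 3%nat => (xmax P, ymax P)
  | _ => (xmin P, ymax P)
  end.
Definition c_far (k : nat) (P : list pt) : pt :=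
  match k with
  | 1%nat => (xmax P, ymax P)
  | 2%nat => (xmin P, ymax P)
  | 3%nat => (xmin P, ymin P)
  | _ => (xmax P, ymin P)
  end.

Definition theta_lb (P : list pt) := lmin theta P.
Definition theta_ub (P : list pt) := lmax theta P.

Definition ray_pt (th t : R) : pt := (t * cos th, t * sin th).

Definition ray_box_near (P : list pt) (th t : R) : Prop :=
  0 <= t /\ in_box P (ray_pt th t) /\
  forall t', 0 <= t' -> in_box P (ray_pt th t') -> t <= t'.
Definition ray_box_far (P : list pt) (th t : R) : Prop :=
  0 <= t /\ in_box P (ray_pt th t) /\
  forall t', 0 <= t' -> in_box P (ray_pt th t') -> t' <= t.

Definition dmax (P : list pt) (e : pt) : R := lmax (fun p => dist_seg p e) P.

(* The distance to the segment [s, e] is quasiconvex along lines, and it does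
   not decrease when a point moves in a direction making a non-acute angle with
   its residual, e.g. radially away from s.  Rotating by right angles reduces
   everything to the first quadrant.  Upper bound: each point of P is dominated
   radially by the point where its ray leaves the bounding box, which lies on
   the far boundary of the box between two of l2, u2, c_f.  Lower bound: l1 and
   u1 lie on the rays through the angularly extreme points of P, nearer to s.
   If e lies outside the wedge of P, all of P lies on one side of the line se;
   after a reflection in the diagonal, e is above P.  Then c_n slides along the
   bottom edge to the lowest point of P, and (when c_f is no farther from s
   than e) c_f slides down the right edge to the rightmost point of P, in both
   cases without getting closer to the segment. *)

From Stdlib Require Import Reals Lra Lia List.
From Stdlib Require Rminmax.
Open Scope R_scope.

Definition dot (p q : pt) : R := fst p * fst q + snd p * snd q.
Definition sqnorm (p : pt) : R := dot p p.
Definition cross (p q : pt) : R := fst p * snd q - snd p * fst q.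

Definition seg_param (p e : pt) : R := Rmax 0 (Rmin 1 (dot p e / sqnorm e)).
Definition seg_residual (p e : pt) : pt :=
  (fst p - seg_param p e * fst e, snd p - seg_param p e * snd e).

Lemma dist_seg_residual p e : dist_seg p e = norm (seg_residual p e).
Proof. reflexivity. Qed.

Lemma sqnorm_nonneg p : 0 <= sqnorm p.
Proof. unfold sqnorm, dot. nra. Qed.

Lemma two_dot_le_sqnorm_add p q : 2 * dot p q <= sqnorm p + sqnorm q.
Proof.
  pose proof (sqnorm_nonneg (fst p - fst q, snd p - snd q)) as H.
  unfold sqnorm, dot in *; simpl in *. lra.
Qed.

Lemma sqnorm_pos p : p <> origin -> 0 < sqnorm p.
Proof.
  intros Hp. destruct p as [x y]. unfold sqnorm, dot; simpl.
  destruct (Req_dec x 0) as [->|Hx]; [destruct (Req_dec y 0) as [->|Hy]|].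
  - contradiction.
  - assert (0 < y * y) by (apply Rsqr_pos_lt; exact Hy). lra.
  - assert (0 < x * x) by (apply Rsqr_pos_lt; exact Hx). nra.
Qed.

Lemma norm_sqnorm p : norm p = sqrt (sqnorm p).
Proof. reflexivity. Qed.

Lemma norm_pos p : p <> origin -> 0 < norm p.
Proof. intros Hp. apply sqrt_lt_R0, sqnorm_pos, Hp. Qed.

Lemma norm_le_of_sqnorm_le p q : sqnorm p <= sqnorm q -> norm p <= norm q.
Proof. intros H. apply sqrt_le_1_alt, H. Qed.

Lemma div_nonneg a b : 0 <= a -> 0 < b -> 0 <= a / b.
Proof. intros Ha Hb. apply Rmult_le_pos; [exact Ha | apply Rlt_le, Rinv_0_lt_compat, Hb]. Qed.

Lemma div_le_1 a b : 0 < b -> a <= b -> a / b <= 1.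
Proof.
  intros Hb Hab. apply (Rmult_le_reg_r b); [exact Hb|].
  unfold Rdiv. rewrite Rmult_assoc, Rinv_l by lra. lra.
Qed.

Lemma seg_param_cases p e : 0 < sqnorm e ->
  (seg_param p e = 0 /\ dot p e <= 0) \/
  (seg_param p e = 1 /\ sqnorm e <= dot p e) \/
  (seg_param p e = dot p e / sqnorm e /\ 0 <= dot p e <= sqnorm e).
Proof.
  intros HE. unfold seg_param.
  destruct (Rle_dec (dot p e) 0) as [H0|H0].
  - left. split; [|exact H0].
    assert (dot p e / sqnorm e <= 0).
    { unfold Rdiv. assert (0 < / sqnorm e) by (apply Rinv_0_lt_compat, HE). nra. }
    rewrite Rmin_right, Rmax_left by lra. reflexivity.
  - destruct (Rle_dec (sqnorm e) (dot p e)) as [H1|H1].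
    + right; left. split; [|exact H1].
      assert (1 <= dot p e / sqnorm e).
      { apply (Rmult_le_reg_r (sqnorm e)); [exact HE|].
        unfold Rdiv. rewrite Rmult_assoc, Rinv_l by lra. lra. }
      rewrite Rmin_left, Rmax_right by lra. reflexivity.
    + right; right. split; [|lra].
      assert (0 <= dot p e / sqnorm e) by (apply div_nonneg; lra).
      assert (dot p e / sqnorm e <= 1) by (apply div_le_1; lra).
      rewrite Rmin_right, Rmax_right by lra. reflexivity.
Qed.

Lemma dot_seg_residual p e :
  dot (seg_residual p e) e = dot p e - seg_param p e * sqnorm e.
Proof. unfold seg_residual, sqnorm, dot; simpl. ring. Qed.

Lemma seg_param_range p e : 0 <= seg_param p e <= 1.
Proof. split; [apply Rmax_l | apply Rmax_lub; [lra | apply Rmin_l]]. Qed.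

(* The clamped parameter is the projection onto the segment: the residual makes
   a non-acute angle with every admissible change of the parameter. *)
Lemma seg_param_variational p e s : 0 < sqnorm e -> 0 <= s <= 1 ->
  0 <= (seg_param p e - s) * dot (seg_residual p e) e.
Proof.
  intros HE Hs. rewrite dot_seg_residual.
  destruct (seg_param_cases p e HE) as [[-> H]|[[-> H]|[-> H]]]; [nra | nra |].
  replace (dot p e - dot p e / sqnorm e * sqnorm e) with 0 by (field; lra). lra.
Qed.

Lemma dist_seg_le_param p e s : 0 < sqnorm e -> 0 <= s <= 1 ->
  dist_seg p e <= norm (fst p - s * fst e, snd p - s * snd e).
Proof.
  intros HE Hs. rewrite dist_seg_residual. apply norm_le_of_sqnorm_le.
  pose proof (seg_param_variational p e s HE Hs) as Hv.
  set (t := seg_param p e) in *. set (r := seg_residual p e) in *.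
  assert (Hsq : sqnorm (fst p - s * fst e, snd p - s * snd e)
              = sqnorm r + (t - s) * (t - s) * sqnorm e + 2 * ((t - s) * dot r e))
    by (unfold r, seg_residual, sqnorm, dot; fold t; simpl; ring).
  assert (0 <= (t - s) * (t - s) * sqnorm e)
    by (apply Rmult_le_pos; [apply Rle_0_sqr | apply sqnorm_nonneg]).
  lra.
Qed.

Lemma dist_seg_le_along p w h e : 0 < sqnorm e -> 0 <= h ->
  0 <= dot (seg_residual p e) w ->
  dist_seg p e <= dist_seg (fst p + h * fst w, snd p + h * snd w) e.
Proof.
  intros HE Hh Hw. set (q := (fst p + h * fst w, snd p + h * snd w)).
  pose proof (seg_param_variational p e (seg_param q e) HE (seg_param_range q e)) as Hv.
  rewrite !dist_seg_residual. apply norm_le_of_sqnorm_le.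
  set (r := seg_residual p e) in *.
  set (d := (h * fst w + (seg_param p e - seg_param q e) * fst e,
             h * snd w + (seg_param p e - seg_param q e) * snd e)).
  (* the residual of q is r + d, and d has a nonnegative component along r *)
  assert (Hsq : sqnorm (seg_residual q e) = sqnorm r + sqnorm d + 2 * dot r d)
    by (unfold r, d, seg_residual, sqnorm, dot, q; simpl; ring).
  assert (Hrd : dot r d = h * dot r w + (seg_param p e - seg_param q e) * dot r e)
    by (unfold d, dot; simpl; ring).
  pose proof (sqnorm_nonneg d).
  assert (0 <= h * dot r w) by (apply Rmult_le_pos; assumption).
  lra.
Qed.

Lemma dist_seg_le_scale p e l : 0 < sqnorm e -> 1 <= l ->
  dist_seg p e <= dist_seg (l * fst p, l * snd p) e.
Proof.
  intros HE Hl.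
  replace (l * fst p, l * snd p)
    with (fst p + (l - 1) * fst p, snd p + (l - 1) * snd p) by (f_equal; ring).
  apply dist_seg_le_along; [exact HE | lra |].
  pose proof (seg_param_variational p e 0 HE ltac:(lra)) as Hv.
  assert (Hrp : dot (seg_residual p e) p
              = sqnorm (seg_residual p e) + (seg_param p e - 0) * dot (seg_residual p e) e)
    by (unfold seg_residual, sqnorm, dot; simpl; ring).
  pose proof (sqnorm_nonneg (seg_residual p e)). lra.
Qed.

Lemma dist_seg_origin_le p e : 0 < sqnorm e -> dist_seg origin e <= dist_seg p e.
Proof.
  intros HE. eapply Rle_trans; [apply (dist_seg_le_param origin e 0 HE); lra|].
  replace (fst origin - 0 * fst e, snd origin - 0 * snd e) with origin
    by (unfold origin; simpl; f_equal; ring).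
  unfold norm, origin; simpl. rewrite Rmult_0_l, Rplus_0_l, sqrt_0.
  rewrite dist_seg_residual. apply sqrt_pos.
Qed.

Lemma dist_seg_ray_pt_mono e th t1 t2 : 0 < sqnorm e -> 0 <= t1 <= t2 ->
  dist_seg (ray_pt th t1) e <= dist_seg (ray_pt th t2) e.
Proof.
  intros HE Ht. destruct (Req_dec t1 0) as [->|Ht1].
  - replace (ray_pt th 0) with origin by (unfold ray_pt, origin; f_equal; ring).
    apply dist_seg_origin_le, HE.
  - replace (ray_pt th t2) with (t2 / t1 * fst (ray_pt th t1), t2 / t1 * snd (ray_pt th t1))
      by (unfold ray_pt; simpl; f_equal; field; lra).
    apply dist_seg_le_scale; [exact HE|].
    apply (Rmult_le_reg_r t1); [lra|]. unfold Rdiv. rewrite Rmult_assoc, Rinv_l by lra. lra.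
Qed.

Definition mix (a : R) (p q : pt) : pt :=
  (a * fst p + (1 - a) * fst q, a * snd p + (1 - a) * snd q).

Lemma sqnorm_mix a p q : 0 <= a <= 1 ->
  sqnorm (mix a p q) <= Rmax (sqnorm p) (sqnorm q).
Proof.
  intros Ha. set (M := Rmax (sqnorm p) (sqnorm q)).
  assert (Hp : sqnorm p <= M) by apply Rmax_l.
  assert (Hq : sqnorm q <= M) by apply Rmax_r.
  pose proof (two_dot_le_sqnorm_add p q).
  assert (Hexp : sqnorm (mix a p q)
               = a * a * sqnorm p + (1 - a) * (1 - a) * sqnorm q + a * (1 - a) * (2 * dot p q))
    by (unfold mix, sqnorm, dot; simpl; ring).
  assert (0 <= a * (1 - a)) by nra.
  assert (a * a * sqnorm p <= a * a * M) by (apply Rmult_le_compat_l; nra).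
  assert ((1 - a) * (1 - a) * sqnorm q <= (1 - a) * (1 - a) * M)
    by (apply Rmult_le_compat_l; nra).
  assert (a * (1 - a) * (2 * dot p q) <= a * (1 - a) * (2 * M))
    by (apply Rmult_le_compat_l; lra).
  nra.
Qed.

Lemma dist_seg_quasiconvex a p q e : 0 < sqnorm e -> 0 <= a <= 1 ->
  dist_seg (mix a p q) e <= Rmax (dist_seg p e) (dist_seg q e).
Proof.
  intros HE Ha.
  pose proof (seg_param_range p e). pose proof (seg_param_range q e).
  set (s := a * seg_param p e + (1 - a) * seg_param q e).
  eapply Rle_trans; [apply (dist_seg_le_param _ _ s HE); unfold s; nra|].
  replace (fst (mix a p q) - s * fst e, snd (mix a p q) - s * snd e)
    with (mix a (seg_residual p e) (seg_residual q e))
    by (unfold mix, seg_residual, s; simpl; f_equal; ring).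
  rewrite !dist_seg_residual, !norm_sqnorm.
  eapply Rle_trans; [apply sqrt_le_1_alt, sqnorm_mix, Ha|].
  unfold Rmax at 1. destruct Rle_dec; [apply Rmax_r | apply Rmax_l].
Qed.

Lemma dist_seg_vertical_between e X a y b : 0 < sqnorm e -> a <= y <= b ->
  dist_seg (X, y) e <= Rmax (dist_seg (X, a) e) (dist_seg (X, b) e).
Proof.
  intros HE Hy. destruct (Req_dec a b) as [<-|Hab].
  - replace y with a by lra. rewrite Rmax_left; lra.
  - replace (X, y) with (mix ((b - y) / (b - a)) (X, a) (X, b))
      by (unfold mix; simpl; f_equal; field; lra).
    apply dist_seg_quasiconvex; [exact HE|].
    split; [apply div_nonneg | apply div_le_1]; lra.
Qed.

Lemma dist_seg_mono_right_below e xm ym x2 :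
  0 < sqnorm e -> 0 <= fst e -> 0 <= snd e -> 0 <= xm -> 0 <= ym -> xm <= x2 ->
  0 <= cross (xm, ym) e -> dist_seg (xm, ym) e <= dist_seg (x2, ym) e.
Proof.
  intros HE Hex Hey Hxm Hym Hx2 Hc.
  replace (x2, ym) with (fst (xm, ym) + (x2 - xm) * fst (1, 0), snd (xm, ym) + (x2 - xm) * snd (1, 0))
    by (simpl; f_equal; ring).
  apply dist_seg_le_along; [exact HE | lra |].
  unfold seg_residual, cross, dot in *; simpl in *.
  destruct (seg_param_cases (xm, ym) e HE) as [[-> Hd]|[[-> Hd]|[-> Hd]]];
    unfold sqnorm, dot in *; simpl in *.
  - lra.
  - assert (0 <= snd e * (xm * snd e - ym * fst e)) by (apply Rmult_le_pos; lra).
    assert (fst e * (fst e * fst e + snd e * snd e) <= fst e * (xm * fst e + ym * snd e))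
      by (apply Rmult_le_compat_l; lra).
    nra.
  - replace ((xm - (xm * fst e + ym * snd e) / (fst e * fst e + snd e * snd e) * fst e) * 1
             + (ym - (xm * fst e + ym * snd e) / (fst e * fst e + snd e * snd e) * snd e) * 0)
      with (snd e * (xm * snd e - ym * fst e) / (fst e * fst e + snd e * snd e))
      by (field; lra).
    apply div_nonneg; [apply Rmult_le_pos|]; lra.
Qed.

Lemma dist_seg_mono_down_below e X Y y3 :
  0 < sqnorm e -> 0 <= fst e -> 0 <= snd e -> 0 <= X -> 0 <= Y ->
  sqnorm (X, Y) <= sqnorm e -> 0 <= cross (X, Y) e -> y3 <= Y ->
  dist_seg (X, Y) e <= dist_seg (X, y3) e.
Proof.
  intros HE Hex Hey HX HY Hn Hc Hy3.
  replace (X, y3) with (fst (X, Y) + (Y - y3) * fst (0, -1), snd (X, Y) + (Y - y3) * snd (0, -1))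
    by (simpl; f_equal; ring).
  apply dist_seg_le_along; [exact HE | lra |].
  (* the corner is no farther from s than e, so its projection is interior *)
  assert (Hd : 0 <= dot (X, Y) e <= sqnorm e).
  { pose proof (two_dot_le_sqnorm_add (X, Y) e).
    split; [unfold dot; simpl; nra | lra]. }
  unfold seg_residual; simpl fst; simpl snd.
  destruct (seg_param_cases (X, Y) e HE) as [[-> H]|[[-> H]|[-> H]]];
    unfold cross, sqnorm, dot in *; simpl in *.
  - nra.
  - nra.
  - replace ((X - (X * fst e + Y * snd e) / (fst e * fst e + snd e * snd e) * fst e) * 0
             + (Y - (X * fst e + Y * snd e) / (fst e * fst e + snd e * snd e) * snd e) * -1)
      with (fst e * (X * snd e - Y * fst e) / (fst e * fst e + snd e * snd e))
      by (field; lra).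
    apply div_nonneg; [apply Rmult_le_pos|]; lra.
Qed.

Lemma lmin_cons_cons f x y l : lmin f (x :: y :: l) = Rmin (f y) (lmin f (x :: l)).
Proof. reflexivity. Qed.

Lemma lmax_cons_cons f x y l : lmax f (x :: y :: l) = Rmax (f y) (lmax f (x :: l)).
Proof. reflexivity. Qed.

Lemma lmin_le f P p : In p P -> lmin f P <= f p.
Proof.
  destruct P as [|x l]; [contradiction|].
  induction l as [|y l IH]; intros Hp.
  - destruct Hp as [<-|[]]. apply Rle_refl.
  - rewrite lmin_cons_cons. destruct Hp as [<-|[<-|Hp]].
    + eapply Rle_trans; [apply Rmin_r | apply IH; left; reflexivity].
    + apply Rmin_l.
    + eapply Rle_trans; [apply Rmin_r | apply IH; right; exact Hp].
Qed.

Lemma lmax_ge f P p : In p P -> f p <= lmax f P.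
Proof.
  destruct P as [|x l]; [contradiction|].
  induction l as [|y l IH]; intros Hp.
  - destruct Hp as [<-|[]]. apply Rle_refl.
  - rewrite lmax_cons_cons. destruct Hp as [<-|[<-|Hp]].
    + eapply Rle_trans; [apply IH; left; reflexivity | apply Rmax_r].
    + apply Rmax_l.
    + eapply Rle_trans; [apply IH; right; exact Hp | apply Rmax_r].
Qed.

Lemma lmin_attained f P : P <> nil -> exists p, In p P /\ lmin f P = f p.
Proof.
  destruct P as [|x l]; [contradiction|]. intros _.
  induction l as [|y l [p [Hp Ep]]].
  - exists x. split; [left|]; reflexivity.
  - rewrite lmin_cons_cons. unfold Rmin. destruct Rle_dec.
    + exists y. split; [right; left|]; reflexivity.
    + exists p. split; [destruct Hp as [<-|Hp]; [left | right; right] |]; auto.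
Qed.

Lemma lmax_attained f P : P <> nil -> exists p, In p P /\ lmax f P = f p.
Proof.
  destruct P as [|x l]; [contradiction|]. intros _.
  induction l as [|y l [p [Hp Ep]]].
  - exists x. split; [left|]; reflexivity.
  - rewrite lmax_cons_cons. unfold Rmax. destruct Rle_dec.
    + exists p. split; [destruct Hp as [<-|Hp]; [left | right; right] |]; auto.
    + exists y. split; [right; left|]; reflexivity.
Qed.

Lemma lmax_lub f P M : P <> nil -> (forall p, In p P -> f p <= M) -> lmax f P <= M.
Proof. intros HP H. destruct (lmax_attained f P HP) as [p [Hp ->]]. exact (H p Hp). Qed.

Lemma lmin_map f g h P : (forall p, In p P -> f (g p) = h p) ->
  lmin f (map g P) = lmin h P.
Proof.
  destruct P as [|x l]; [reflexivity|]. simpl map.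
  induction l as [|y l IH]; intros H.
  - apply H. left. reflexivity.
  - cbn [map]. rewrite !lmin_cons_cons, IH.
    + f_equal. apply H. right; left; reflexivity.
    + intros p Hp. apply H. destruct Hp as [<-|Hp]; [left; reflexivity | right; right; exact Hp].
Qed.

Lemma lmax_map f g h P : (forall p, In p P -> f (g p) = h p) ->
  lmax f (map g P) = lmax h P.
Proof.
  destruct P as [|x l]; [reflexivity|]. simpl map.
  induction l as [|y l IH]; intros H.
  - apply H. left. reflexivity.
  - cbn [map]. rewrite !lmax_cons_cons, IH.
    + f_equal. apply H. right; left; reflexivity.
    + intros p Hp. apply H. destruct Hp as [<-|Hp]; [left; reflexivity | right; right; exact Hp].
Qed.

Lemma lmin_sub_const f c P : P <> nil -> lmin (fun p => f p - c) P = lmin f P - c.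
Proof.
  destruct P as [|x l]; [contradiction|]. intros _.
  induction l as [|y l IH]; [reflexivity|].
  rewrite !lmin_cons_cons, IH. apply Rminmax.R.plus_min_distr_r.
Qed.

Lemma lmax_sub_const f c P : P <> nil -> lmax (fun p => f p - c) P = lmax f P - c.
Proof.
  destruct P as [|x l]; [contradiction|]. intros _.
  induction l as [|y l IH]; [reflexivity|].
  rewrite !lmax_cons_cons, IH. apply Rminmax.R.plus_max_distr_r.
Qed.

Lemma lmin_opp f P : P <> nil -> lmin (fun p => - f p) P = - lmax f P.
Proof.
  destruct P as [|x l]; [contradiction|]. intros _.
  induction l as [|y l IH]; [reflexivity|].
  rewrite lmin_cons_cons, lmax_cons_cons, IH, Ropp_Rmax. reflexivity.
Qed.

Lemma lmax_opp f P : P <> nil -> lmax (fun p => - f p) P = - lmin f P.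
Proof.
  destruct P as [|x l]; [contradiction|]. intros _.
  induction l as [|y l IH]; [reflexivity|].
  rewrite lmax_cons_cons, lmin_cons_cons, IH, Ropp_Rmin. reflexivity.
Qed.

Lemma in_box_of_In P p : In p P -> in_box P p.
Proof.
  intros Hp. split; split;
    [apply (lmin_le fst) | apply (lmax_ge fst) | apply (lmin_le snd) | apply (lmax_ge snd)];
    exact Hp.
Qed.

Lemma dist_seg_le_dmax P e p : In p P -> dist_seg p e <= dmax P e.
Proof. apply (lmax_ge (fun q => dist_seg q e)). Qed.

Lemma cos_2PI_minus a : cos (2 * PI - a) = cos a.
Proof. rewrite cos_minus, cos_2PI, sin_2PI. ring. Qed.

Lemma sin_2PI_minus a : sin (2 * PI - a) = - sin a.
Proof. rewrite sin_minus, cos_2PI, sin_2PI. ring. Qed.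

Lemma ray_pt_theta_norm p : p <> origin -> ray_pt (theta p) (norm p) = p.
Proof.
  intros Hp. pose proof (norm_pos p Hp) as Hr.
  assert (Hsq : norm p * norm p = fst p * fst p + snd p * snd p)
    by (apply sqrt_sqrt, sqnorm_nonneg).
  destruct p as [x y]. unfold ray_pt, theta. simpl in *. set (r := norm (x, y)) in *.
  assert (Hz : -1 <= x / r <= 1).
  { assert (x / r * (x / r) <= 1); [|nra].
    replace (x / r * (x / r)) with (x * x / (r * r)) by (field; lra).
    apply div_le_1; nra. }
  assert (Hs : sin (acos (x / r)) = Rabs (y / r)).
  { rewrite sin_acos, <- sqrt_Rsqr_abs by exact Hz. f_equal.
    unfold Rsqr. field_simplify_eq; [nra | lra]. }
  assert (Hyr : y / r = / r * y) by (unfold Rdiv; ring).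
  assert (0 < / r) by (apply Rinv_0_lt_compat, Hr).
  destruct (Rle_dec 0 y) as [Hy|Hy].
  - rewrite cos_acos, Hs, Rabs_pos_eq by nra. f_equal; field; lra.
  - rewrite cos_2PI_minus, sin_2PI_minus, cos_acos, Hs, Rabs_left by nra.
    f_equal; field; lra.
Qed.

Lemma theta_ray_pt a r : 0 < r -> 0 <= a < 2 * PI -> theta (ray_pt a r) = a.
Proof.
  intros Hr Ha. unfold theta, ray_pt, norm; simpl.
  replace (r * cos a * (r * cos a) + r * sin a * (r * sin a)) with (r * r)
    by (pose proof (sin2_cos2 a) as H; unfold Rsqr in H; nra).
  rewrite sqrt_square by lra.
  replace (r * cos a / r) with (cos a) by (field; lra).
  destruct (Rle_dec a PI) as [HaP|HaP].
  - assert (0 <= sin a) by (apply sin_ge_0; lra).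
    destruct (Rle_dec 0 (r * sin a)) as [_|Hn]; [apply acos_cos; lra|].
    exfalso. apply Hn, Rmult_le_pos; lra.
  - assert (sin a < 0) by (apply sin_lt_0; lra).
    destruct (Rle_dec 0 (r * sin a)) as [Hn|_]; [nra|].
    rewrite <- (cos_2PI_minus a), acos_cos by lra. ring.
Qed.

Lemma cross_ray_pt_nonneg a b r1 r2 : 0 <= r1 -> 0 <= r2 -> a <= b <= a + PI ->
  0 <= cross (ray_pt a r1) (ray_pt b r2).
Proof.
  intros H1 H2 Hab.
  replace (cross (ray_pt a r1) (ray_pt b r2)) with (r1 * r2 * sin (b - a))
    by (unfold cross, ray_pt; simpl; rewrite sin_minus; ring).
  apply Rmult_le_pos; [apply Rmult_le_pos; assumption | apply sin_ge_0; lra].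
Qed.

Lemma cross_nonneg_of_theta_le p q : p <> origin -> q <> origin ->
  theta p <= theta q <= theta p + PI -> 0 <= cross p q.
Proof.
  intros Hp Hq Hpq. rewrite <- (ray_pt_theta_norm p Hp), <- (ray_pt_theta_norm q Hq).
  apply cross_ray_pt_nonneg; [apply Rlt_le, norm_pos .. | exact Hpq]; assumption.
Qed.

Definition swap_xy (p : pt) : pt := (snd p, fst p).

Lemma dot_swap_xy p q : dot (swap_xy p) (swap_xy q) = dot p q.
Proof. unfold dot, swap_xy; simpl. ring. Qed.

Lemma sqnorm_swap_xy p : sqnorm (swap_xy p) = sqnorm p.
Proof. apply dot_swap_xy. Qed.

Lemma cross_swap_xy p q : cross (swap_xy p) (swap_xy q) = cross q p.
Proof. unfold cross, swap_xy; simpl. ring. Qed.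

Lemma dist_seg_swap_xy p e : dist_seg (swap_xy p) (swap_xy e) = dist_seg p e.
Proof.
  rewrite !dist_seg_residual. unfold seg_residual, seg_param.
  rewrite dot_swap_xy, sqnorm_swap_xy. unfold norm, swap_xy; simpl. f_equal. ring.
Qed.

Lemma in_map_forall {A B} (g : A -> B) (Q : B -> Prop) (l : list A) :
  (forall x, In x l -> Q (g x)) -> forall y, In y (map g l) -> Q y.
Proof. intros H y Hy. apply in_map_iff in Hy as [x [<- Hx]]. exact (H x Hx). Qed.

Lemma map_ne_nil {A B} (g : A -> B) (l : list A) : l <> nil -> map g l <> nil.
Proof. destruct l; [contradiction | discriminate]. Qed.

Lemma xmin_swap_xy P : xmin (map swap_xy P) = ymin P.
Proof. apply lmin_map. reflexivity. Qed.

Lemma ymin_swap_xy P : ymin (map swap_xy P) = xmin P.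
Proof. apply lmin_map. reflexivity. Qed.

Lemma xmax_swap_xy P : xmax (map swap_xy P) = ymax P.
Proof. apply lmax_map. reflexivity. Qed.

Lemma ymax_swap_xy P : ymax (map swap_xy P) = xmax P.
Proof. apply lmax_map. reflexivity. Qed.

Lemma dmax_swap_xy P e : dmax (map swap_xy P) (swap_xy e) = dmax P e.
Proof. apply lmax_map. intros p _. apply dist_seg_swap_xy. Qed.

Section FirstQuadrantCorners.

Variables (P : list pt) (e : pt).
Hypothesis HP : P <> nil.
Hypothesis HPq : forall p, In p P -> 0 <= fst p /\ 0 <= snd p.
Hypotheses (Hex : 0 <= fst e) (Hey : 0 <= snd e) (HE : 0 < sqnorm e).

Lemma near_corner_le_dmax_ccw : (forall p, In p P -> 0 <= cross p e) ->
  dist_seg (xmin P, ymin P) e <= dmax P e.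
Proof.
  intros Hccw.
  destruct (lmin_attained fst P HP) as [p1 [Hp1 E1]].
  destruct (lmin_attained snd P HP) as [p2 [Hp2 E2]].
  change (lmin fst P) with (xmin P) in E1. change (lmin snd P) with (ymin P) in E2.
  destruct (in_box_of_In P p1 Hp1) as [_ [Hy1 _]].
  destruct (in_box_of_In P p2 Hp2) as [[Hx2 _] _].
  pose proof (HPq p1 Hp1). pose proof (HPq p2 Hp2). pose proof (Hccw p1 Hp1).
  eapply Rle_trans; [|apply (dist_seg_le_dmax P e p2 Hp2)].
  replace p2 with (fst p2, ymin P) by (rewrite E2; destruct p2; reflexivity).
  (* the corner lies below e because the leftmost point of P does *)
  apply dist_seg_mono_right_below; try assumption; try lra.
  unfold cross in *; simpl. rewrite E1. nra.
Qed.

Lemma far_corner_le_dmax_ccw : (forall p, In p P -> 0 <= cross p e) ->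
  sqnorm (xmax P, ymax P) <= sqnorm e ->
  dist_seg (xmax P, ymax P) e <= dmax P e.
Proof.
  intros Hccw Hn.
  destruct (lmax_attained fst P HP) as [p3 [Hp3 E3]].
  destruct (lmax_attained snd P HP) as [p4 [Hp4 E4]].
  change (lmax fst P) with (xmax P) in E3. change (lmax snd P) with (ymax P) in E4.
  destruct (in_box_of_In P p3 Hp3) as [_ [_ Hy3]].
  destruct (in_box_of_In P p4 Hp4) as [[_ Hx4] _].
  pose proof (HPq p3 Hp3). pose proof (HPq p4 Hp4). pose proof (Hccw p4 Hp4).
  eapply Rle_trans; [|apply (dist_seg_le_dmax P e p3 Hp3)].
  replace p3 with (xmax P, snd p3) by (rewrite E3; destruct p3; reflexivity).
  (* the corner lies below e because the topmost point of P does *)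
  apply dist_seg_mono_down_below; try assumption; try lra.
  unfold cross in *; simpl. rewrite E4. nra.
Qed.

End FirstQuadrantCorners.

Definition one_sided (P : list pt) (e : pt) : Prop :=
  (forall p, In p P -> 0 <= cross p e) \/ (forall p, In p P -> 0 <= cross e p).

Section ReflectInDiagonal.

Variables (P : list pt) (e : pt).
Hypothesis HP : P <> nil.
Hypothesis HPq : forall p, In p P -> 0 <= fst p /\ 0 <= snd p.
Hypotheses (Hex : 0 <= fst e) (Hey : 0 <= snd e) (HE : 0 < sqnorm e).

Let HP' : map swap_xy P <> nil := map_ne_nil swap_xy P HP.

Lemma swap_xy_nonneg : forall q, In q (map swap_xy P) -> 0 <= fst q /\ 0 <= snd q.
Proof. apply in_map_forall. intros p Hp. simpl. specialize (HPq p Hp). tauto. Qed.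

Lemma swap_xy_ccw : (forall p, In p P -> 0 <= cross e p) ->
  forall q, In q (map swap_xy P) -> 0 <= cross q (swap_xy e).
Proof. intros Hcw. apply in_map_forall. intros p Hp. rewrite cross_swap_xy. auto. Qed.

Lemma near_corner_le_dmax_q1 : one_sided P e ->
  dist_seg (xmin P, ymin P) e <= dmax P e.
Proof.
  intros [Hccw|Hcw]; [apply near_corner_le_dmax_ccw; assumption|].
  rewrite <- dist_seg_swap_xy, <- dmax_swap_xy.
  change (swap_xy (xmin P, ymin P)) with (ymin P, xmin P).
  rewrite <- (ymin_swap_xy P), <- (xmin_swap_xy P).
  apply near_corner_le_dmax_ccw; try assumption.
  - exact swap_xy_nonneg.
  - rewrite sqnorm_swap_xy. exact HE.
  - apply swap_xy_ccw, Hcw.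
Qed.

Lemma far_corner_le_dmax_q1 : one_sided P e ->
  sqnorm (xmax P, ymax P) <= sqnorm e ->
  dist_seg (xmax P, ymax P) e <= dmax P e.
Proof.
  intros [Hccw|Hcw] Hn; [apply far_corner_le_dmax_ccw; assumption|].
  rewrite <- dist_seg_swap_xy, <- dmax_swap_xy.
  change (swap_xy (xmax P, ymax P)) with (ymax P, xmax P).
  rewrite <- (ymax_swap_xy P), <- (xmax_swap_xy P).
  apply far_corner_le_dmax_ccw; try assumption.
  - exact swap_xy_nonneg.
  - rewrite sqnorm_swap_xy. exact HE.
  - apply swap_xy_ccw, Hcw.
  - rewrite xmax_swap_xy, ymax_swap_xy, sqnorm_swap_xy.
    change (ymax P, xmax P) with (swap_xy (xmax P, ymax P)). rewrite sqnorm_swap_xy. exact Hn.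
Qed.

End ReflectInDiagonal.

Definition on_far_side (X Y : R) (q : pt) : Prop :=
  (fst q = X /\ snd q <= Y) \/ (fst q <= X /\ snd q = Y).

Lemma on_far_side_swap_xy X Y q : on_far_side X Y q -> on_far_side Y X (swap_xy q).
Proof. unfold on_far_side, swap_xy; simpl. tauto. Qed.

Lemma ray_box_far_on_far_side P th t : 0 <= cos th -> 0 <= sin th ->
  ray_box_far P th t -> on_far_side (xmax P) (ymax P) (ray_pt th t).
Proof.
  intros Hc Hs [Ht [Hbox Hfar]]. pose proof Hbox as [[Hx1 Hx2] [Hy1 Hy2]].
  unfold on_far_side, ray_pt in *; simpl in *.
  destruct (Req_dec (t * cos th) (xmax P)) as [Ex|Ex]; [left; split; assumption|].
  destruct (Req_dec (t * sin th) (ymax P)) as [Ey|Ey]; [right; split; assumption|].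
  exfalso.
  (* otherwise the ray could be continued a little further inside the box *)
  set (m := Rmin (xmax P - t * cos th) (ymax P - t * sin th)).
  assert (Hm : 0 < m) by (apply Rmin_glb_lt; lra).
  assert (m <= xmax P - t * cos th) by apply Rmin_l.
  assert (m <= ymax P - t * sin th) by apply Rmin_r.
  pose proof (COS_bound th). pose proof (SIN_bound th).
  assert (t + m <= t); [|lra].
  apply Hfar; [lra|]. unfold in_box, ray_pt; simpl. split; split; nra.
Qed.

(* [p] is dominated radially by the point where its ray leaves the box through
   the right side, and that point lies between two of [L], [U], [(X, Y)]. *)
Lemma dist_seg_le_far_boundary e X Y p L U M : 0 < sqnorm e ->
  0 < fst p -> 0 <= snd p -> fst p <= X -> snd p * X <= fst p * Y ->
  on_far_side X Y L -> on_far_side X Y U -> 0 <= cross L p -> 0 <= cross p U ->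
  dist_seg L e <= M -> dist_seg U e <= M -> dist_seg (X, Y) e <= M ->
  dist_seg p e <= M.
Proof.
  intros HE Hx Hy HxX Hexit HL HU HLp HpU DL DU DC.
  destruct p as [x y]; simpl in *.
  set (yq := X / x * y).
  assert (Eyq : yq * x = X * y) by (unfold yq; field; lra).
  assert (Hq : dist_seg (x, y) e <= dist_seg (X, yq) e).
  { replace (X, yq) with (X / x * fst (x, y), X / x * snd (x, y))
      by (unfold yq; simpl; f_equal; field; lra).
    apply dist_seg_le_scale; [exact HE|].
    apply (Rmult_le_reg_r x); [lra|]. unfold Rdiv. rewrite Rmult_assoc, Rinv_l by lra. lra. }
  assert (Hlow : exists a, a <= yq /\ dist_seg (X, a) e <= M).
  { destruct L as [a1 a2]. unfold cross, on_far_side in *; simpl in *.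
    destruct HL as [[-> _]|[Ha1 ->]].
    - exists a2. split; [apply (Rmult_le_reg_r x); lra | exact DL].
    - exists Y. split; [apply (Rmult_le_reg_r x); nra | exact DC]. }
  assert (Hup : exists b, yq <= b /\ dist_seg (X, b) e <= M).
  { destruct U as [b1 b2]. unfold cross, on_far_side in *; simpl in *.
    destruct HU as [[-> _]|[_ ->]].
    - exists b2. split; [apply (Rmult_le_reg_r x); lra | exact DU].
    - exists Y. split; [apply (Rmult_le_reg_r x); lra | exact DC]. }
  destruct Hlow as [a [Ha Da]]. destruct Hup as [b [Hb Db]].
  eapply Rle_trans; [exact Hq|].
  eapply Rle_trans; [apply (dist_seg_vertical_between e X a yq b HE); lra|].
  apply Rmax_lub; assumption.
Qed.

Lemma quadrant1_coords p : in_quadrant 1 p ->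
  0 < fst p /\ 0 <= snd p /\ 0 <= theta p < PI / 2.
Proof.
  intros [Hp Ht]. simpl in Ht. rewrite Rmult_0_l, Rmult_1_l in Ht.
  pose proof PI_RGT_0. pose proof (norm_pos p Hp).
  assert (0 < cos (theta p)) by (apply cos_gt_0; lra).
  assert (0 <= sin (theta p)) by (apply sin_ge_0; lra).
  pose proof (f_equal fst (ray_pt_theta_norm p Hp)) as Ex.
  pose proof (f_equal snd (ray_pt_theta_norm p Hp)) as Ey.
  unfold ray_pt in Ex, Ey; simpl in Ex, Ey. rewrite <- Ex, <- Ey.
  repeat split; try lra; nra.
Qed.

Lemma theta_bounds_q1 P : P <> nil -> (forall p, In p P -> in_quadrant 1 p) ->
  0 <= theta_lb P <= theta_ub P /\ theta_ub P < PI / 2.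
Proof.
  intros HP HQ. unfold theta_lb, theta_ub.
  destruct (lmin_attained theta P HP) as [p [Hp Ep]].
  destruct (lmax_attained theta P HP) as [q [Hq Eq]].
  pose proof (lmax_ge theta P p Hp).
  destruct (quadrant1_coords p (HQ p Hp)) as [_ [_ Hpt]].
  destruct (quadrant1_coords q (HQ q Hq)) as [_ [_ Hqt]].
  lra.
Qed.

Lemma near_ray_le_dmax P e p0 t : 0 < sqnorm e -> In p0 P -> p0 <> origin ->
  ray_box_near P (theta p0) t -> dist_seg (ray_pt (theta p0) t) e <= dmax P e.
Proof.
  intros HE Hp0 Hn [Ht [_ Hnear]].
  assert (Hin : in_box P (ray_pt (theta p0) (norm p0)))
    by (rewrite ray_pt_theta_norm by exact Hn; apply in_box_of_In, Hp0).
  eapply Rle_trans; [apply (dist_seg_ray_pt_mono e _ t (norm p0) HE)|].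
  - split; [exact Ht | apply Hnear; [apply Rlt_le, norm_pos, Hn | exact Hin]].
  - rewrite ray_pt_theta_norm by exact Hn. apply dist_seg_le_dmax, Hp0.
Qed.

Lemma dmax_le_far_q1 P e tl2 tu2 M : P <> nil ->
  (forall p, In p P -> in_quadrant 1 p) -> 0 < sqnorm e ->
  ray_box_far P (theta_lb P) tl2 -> ray_box_far P (theta_ub P) tu2 ->
  dist_seg (ray_pt (theta_lb P) tl2) e <= M -> dist_seg (ray_pt (theta_ub P) tu2) e <= M ->
  dist_seg (c_far 1 P) e <= M -> dmax P e <= M.
Proof.
  intros HP HQ HE Hl2 Hu2 DL DU DC.
  set (L := ray_pt (theta_lb P) tl2) in *. set (U := ray_pt (theta_ub P) tu2) in *.
  pose proof PI_RGT_0. destruct (theta_bounds_q1 P HP HQ) as [Hlb Hub].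
  assert (FL : on_far_side (xmax P) (ymax P) L)
    by (apply ray_box_far_on_far_side; [apply cos_ge_0 | apply sin_ge_0 | exact Hl2]; lra).
  assert (FU : on_far_side (xmax P) (ymax P) U)
    by (apply ray_box_far_on_far_side; [apply cos_ge_0 | apply sin_ge_0 | exact Hu2]; lra).
  apply lmax_lub; [exact HP|]. intros p Hp.
  destruct (quadrant1_coords p (HQ p Hp)) as [Hx [Hy Ht]].
  destruct (in_box_of_In P p Hp) as [[_ HxX] [_ HyY]].
  pose proof (lmin_le theta P p Hp). pose proof (lmax_ge theta P p Hp).
  pose proof (Rlt_le _ _ (norm_pos p (proj1 (HQ p Hp)))).
  assert (HLp : 0 <= cross L p).
  { rewrite <- (ray_pt_theta_norm p (proj1 (HQ p Hp))).
    apply cross_ray_pt_nonneg; [exact (proj1 Hl2) | assumption | unfold theta_lb in *; lra]. }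
  assert (HpU : 0 <= cross p U).
  { rewrite <- (ray_pt_theta_norm p (proj1 (HQ p Hp))).
    apply cross_ray_pt_nonneg; [assumption | exact (proj1 Hu2) | unfold theta_ub in *; lra]. }
  destruct (Rle_dec (snd p * xmax P) (fst p * ymax P)) as [Hexit|Hexit].
  - exact (dist_seg_le_far_boundary e _ _ p L U M HE Hx Hy HxX Hexit FL FU HLp HpU DL DU DC).
  - (* the ray through p leaves the box through its top side: reflect in the diagonal *)
    rewrite <- dist_seg_swap_xy.
    apply (dist_seg_le_far_boundary _ (ymax P) (xmax P) _ (swap_xy U) (swap_xy L));
      simpl; try lra.
    + rewrite sqnorm_swap_xy. exact HE.
    + destruct (Req_dec (snd p) 0) as [E0|]; [|lra]. rewrite E0 in Hexit. nra.
    + apply on_far_side_swap_xy, FU.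
    + apply on_far_side_swap_xy, FL.
    + rewrite cross_swap_xy. exact HpU.
    + rewrite cross_swap_xy. exact HLp.
    + rewrite dist_seg_swap_xy. exact DU.
    + rewrite dist_seg_swap_xy. exact DL.
    + change (ymax P, xmax P) with (swap_xy (c_far 1 P)).
      rewrite dist_seg_swap_xy. exact DC.
Qed.

Definition bqs_bounds (k : nat) (P : list pt) (e : pt) (tl1 tl2 tu1 tu2 : R) : Prop :=
  (1 <= k <= 4)%nat ->
  P <> nil ->
  (forall p, In p P -> in_quadrant k p) ->
  in_quadrant k e ->
  (theta e > theta_ub P \/ theta e < theta_lb P) ->
  ray_box_near P (theta_lb P) tl1 ->
  ray_box_far P (theta_lb P) tl2 ->
  ray_box_near P (theta_ub P) tu1 ->
  ray_box_far P (theta_ub P) tu2 ->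
  let l1 := ray_pt (theta_lb P) tl1 in
  let l2 := ray_pt (theta_lb P) tl2 in
  let u1 := ray_pt (theta_ub P) tu1 in
  let u2 := ray_pt (theta_ub P) tu2 in
  let cn := c_near k P in
  let cf := c_far k P in
  let D := if Rlt_dec (norm e) (norm cf) then dist_seg cn e else dist_seg cf e in
  Rmax (Rmax (Rmin (dist_seg l1 e) (dist_seg l2 e))
             (Rmin (dist_seg u1 e) (dist_seg u2 e))) D <= dmax P e
  /\
  dmax P e <= Rmax (Rmax (Rmax (dist_seg l1 e) (dist_seg l2 e))
                         (Rmax (dist_seg u1 e) (dist_seg u2 e)))
                   (dist_seg cf e).

Lemma one_sided_q1 P e : (forall p, In p P -> in_quadrant 1 p) -> in_quadrant 1 e ->
  (theta e > theta_ub P \/ theta e < theta_lb P) -> one_sided P e.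
Proof.
  intros HQ He Hside. pose proof PI_RGT_0.
  destruct (quadrant1_coords e He) as [_ [_ Hte]].
  destruct Hside as [Habove|Hbelow]; [left | right]; intros p Hp;
    destruct (quadrant1_coords p (HQ p Hp)) as [_ [_ Htp]];
    apply cross_nonneg_of_theta_le; try apply (HQ p Hp); try apply He.
  - pose proof (lmax_ge theta P p Hp). unfold theta_ub in Habove. lra.
  - pose proof (lmin_le theta P p Hp). unfold theta_lb in Hbelow. lra.
Qed.

Lemma bqs_bounds_q1 P e tl1 tl2 tu1 tu2 : bqs_bounds 1 P e tl1 tl2 tu1 tu2.
Proof.
  intros _ HP HQ He Hside Hl1 Hl2 Hu1 Hu2. cbv zeta.
  destruct (quadrant1_coords e He) as [Hex [Hey _]]. apply Rlt_le in Hex.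
  assert (HE : 0 < sqnorm e) by apply sqnorm_pos, He.
  assert (HPq : forall p, In p P -> 0 <= fst p /\ 0 <= snd p)
    by (intros p Hp; destruct (quadrant1_coords p (HQ p Hp)); lra).
  destruct (lmin_attained theta P HP) as [q0 [Hq0 Elb]].
  destruct (lmax_attained theta P HP) as [q1 [Hq1 Eub]].
  change (lmin theta P) with (theta_lb P) in Elb.
  change (lmax theta P) with (theta_ub P) in Eub.
  split.
  - repeat apply Rmax_lub.
    + eapply Rle_trans; [apply Rmin_l|]. rewrite Elb in *.
      apply (near_ray_le_dmax P e q0); auto. apply HQ, Hq0.
    + eapply Rle_trans; [apply Rmin_l|]. rewrite Eub in *.
      apply (near_ray_le_dmax P e q1); auto. apply HQ, Hq1.
    + pose proof (one_sided_q1 P e HQ He Hside).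
      destruct Rlt_dec as [_|Hfar]; simpl.
      * apply near_corner_le_dmax_q1; assumption.
      * apply far_corner_le_dmax_q1; try assumption.
        apply sqrt_le_0; [apply sqnorm_nonneg .. |]. apply Rnot_lt_le, Hfar.
  - apply (dmax_le_far_q1 P e tl2 tu2); try assumption.
    + eapply Rle_trans; [apply Rmax_r|]. eapply Rle_trans; [apply Rmax_l|]. apply Rmax_l.
    + eapply Rle_trans; [apply Rmax_r|]. eapply Rle_trans; [apply Rmax_r|]. apply Rmax_l.
    + apply Rmax_r.
Qed.

Definition rotate_cw (p : pt) : pt := (snd p, - fst p).

Lemma rotate_cw_ne_origin p : p <> origin -> rotate_cw p <> origin.
Proof.
  intros Hp Hr. apply Hp. destruct p as [x y]. unfold rotate_cw, origin in *.
  injection Hr as Hy Hx. f_equal; lra.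
Qed.

Lemma norm_rotate_cw p : norm (rotate_cw p) = norm p.
Proof. unfold norm, rotate_cw; simpl. f_equal. ring. Qed.

Lemma dot_rotate_cw p q : dot (rotate_cw p) (rotate_cw q) = dot p q.
Proof. unfold dot, rotate_cw; simpl. ring. Qed.

Lemma dist_seg_rotate_cw p e : dist_seg (rotate_cw p) (rotate_cw e) = dist_seg p e.
Proof.
  rewrite !dist_seg_residual. unfold seg_residual, seg_param, sqnorm.
  rewrite !dot_rotate_cw. unfold norm, rotate_cw; simpl. f_equal. ring.
Qed.

Lemma ray_pt_rotate_cw th t : ray_pt (th - PI / 2) t = rotate_cw (ray_pt th t).
Proof.
  unfold ray_pt, rotate_cw; simpl. rewrite cos_minus, sin_minus, cos_PI2, sin_PI2.
  f_equal; ring.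
Qed.

Lemma theta_rotate_cw p : p <> origin -> PI / 2 <= theta p < 2 * PI ->
  theta (rotate_cw p) = theta p - PI / 2.
Proof.
  intros Hp Ht. rewrite <- (ray_pt_theta_norm p Hp) at 1.
  rewrite <- ray_pt_rotate_cw. apply theta_ray_pt; [apply norm_pos, Hp | lra].
Qed.

Lemma in_quadrant_rotate_cw k p : (1 <= k <= 3)%nat -> in_quadrant (S k) p ->
  in_quadrant k (rotate_cw p) /\ theta (rotate_cw p) = theta p - PI / 2.
Proof.
  intros Hk [Hp Ht]. pose proof PI_RGT_0.
  replace (S k - 1)%nat with k in Ht by lia. rewrite S_INR in Ht.
  assert (1 <= INR k <= 3)
    by (split; [replace 1 with (INR 1) by reflexivity | replace 3 with (INR 3) by (simpl; ring)];
        apply le_INR; lia).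
  assert (Er : theta (rotate_cw p) = theta p - PI / 2)
    by (apply theta_rotate_cw; [exact Hp | split; nra]).
  split; [|exact Er]. split; [apply rotate_cw_ne_origin, Hp|].
  rewrite Er, minus_INR by lia. simpl INR. lra.
Qed.

Section RotateList.

Variable P : list pt.
Hypothesis HP : P <> nil.

Lemma xmin_rotate_cw : xmin (map rotate_cw P) = ymin P.
Proof. apply lmin_map. reflexivity. Qed.

Lemma xmax_rotate_cw : xmax (map rotate_cw P) = ymax P.
Proof. apply lmax_map. reflexivity. Qed.

Lemma ymin_rotate_cw : ymin (map rotate_cw P) = - xmax P.
Proof.
  unfold ymin. rewrite (lmin_map _ _ (fun p => - fst p)) by reflexivity.
  apply lmin_opp, HP.
Qed.

Lemma ymax_rotate_cw : ymax (map rotate_cw P) = - xmin P.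
Proof.
  unfold ymax. rewrite (lmax_map _ _ (fun p => - fst p)) by reflexivity.
  apply lmax_opp, HP.
Qed.

Lemma in_box_ray_rotate_cw th t :
  in_box (map rotate_cw P) (ray_pt (th - PI / 2) t) <-> in_box P (ray_pt th t).
Proof.
  unfold in_box. rewrite ray_pt_rotate_cw, xmin_rotate_cw, xmax_rotate_cw,
    ymin_rotate_cw, ymax_rotate_cw.
  unfold rotate_cw; simpl. split; intros; lra.
Qed.

Lemma ray_box_near_rotate_cw th t :
  ray_box_near P th t -> ray_box_near (map rotate_cw P) (th - PI / 2) t.
Proof.
  intros [Ht [Hin Hnear]]. split; [exact Ht|].
  rewrite in_box_ray_rotate_cw. split; [exact Hin|].
  intros t'. rewrite in_box_ray_rotate_cw. apply Hnear.
Qed.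

Lemma ray_box_far_rotate_cw th t :
  ray_box_far P th t -> ray_box_far (map rotate_cw P) (th - PI / 2) t.
Proof.
  intros [Ht [Hin Hfar]]. split; [exact Ht|].
  rewrite in_box_ray_rotate_cw. split; [exact Hin|].
  intros t'. rewrite in_box_ray_rotate_cw. apply Hfar.
Qed.

Lemma c_far_rotate_cw k : (1 <= k <= 3)%nat -> c_far k (map rotate_cw P) = rotate_cw (c_far (S k) P).
Proof.
  intros Hk. destruct k as [|[|[|[|k]]]]; try lia; simpl;
    rewrite ?xmin_rotate_cw, ?xmax_rotate_cw, ?ymin_rotate_cw, ?ymax_rotate_cw; reflexivity.
Qed.

Lemma c_near_rotate_cw k : (1 <= k <= 3)%nat -> c_near k (map rotate_cw P) = rotate_cw (c_near (S k) P).
Proof.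
  intros Hk. destruct k as [|[|[|[|k]]]]; try lia; simpl;
    rewrite ?xmin_rotate_cw, ?xmax_rotate_cw, ?ymin_rotate_cw, ?ymax_rotate_cw; reflexivity.
Qed.

Lemma dmax_rotate_cw e : dmax (map rotate_cw P) (rotate_cw e) = dmax P e.
Proof. apply lmax_map. intros p _. apply dist_seg_rotate_cw. Qed.

Variable k : nat.
Hypothesis Hk : (1 <= k <= 3)%nat.
Hypothesis HQ : forall p, In p P -> in_quadrant (S k) p.

Lemma theta_lb_rotate_cw : theta_lb (map rotate_cw P) = theta_lb P - PI / 2.
Proof.
  unfold theta_lb. rewrite (lmin_map _ _ (fun p => theta p - PI / 2)).
  - apply lmin_sub_const, HP.
  - intros p Hp. apply (in_quadrant_rotate_cw k p Hk (HQ p Hp)).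
Qed.

Lemma theta_ub_rotate_cw : theta_ub (map rotate_cw P) = theta_ub P - PI / 2.
Proof.
  unfold theta_ub. rewrite (lmax_map _ _ (fun p => theta p - PI / 2)).
  - apply lmax_sub_const, HP.
  - intros p Hp. apply (in_quadrant_rotate_cw k p Hk (HQ p Hp)).
Qed.

End RotateList.

Lemma bqs_bounds_rotate_cw k : (1 <= k <= 3)%nat ->
  (forall P e tl1 tl2 tu1 tu2, bqs_bounds k P e tl1 tl2 tu1 tu2) ->
  forall P e tl1 tl2 tu1 tu2, bqs_bounds (S k) P e tl1 tl2 tu1 tu2.
Proof.
  intros Hk IH P e tl1 tl2 tu1 tu2 _ HP HQ He Hside Hl1 Hl2 Hu1 Hu2.
  destruct (in_quadrant_rotate_cw k e Hk He) as [He' Ete].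
  pose proof (theta_lb_rotate_cw P HP k Hk HQ) as Elb.
  pose proof (theta_ub_rotate_cw P HP k Hk HQ) as Eub.
  specialize (IH (map rotate_cw P) (rotate_cw e) tl1 tl2 tu1 tu2).
  unfold bqs_bounds in IH. cbv zeta in IH.
  rewrite Elb, Eub, !ray_pt_rotate_cw, (c_far_rotate_cw P HP k Hk),
    (c_near_rotate_cw P HP k Hk), !norm_rotate_cw, !dist_seg_rotate_cw,
    dmax_rotate_cw in IH.
  apply IH.
  - lia.
  - apply map_ne_nil, HP.
  - apply in_map_forall. intros p Hp. apply (in_quadrant_rotate_cw k p Hk (HQ p Hp)).
  - exact He'.
  - rewrite Ete. lra.
  - apply ray_box_near_rotate_cw; assumption.
  - apply ray_box_far_rotate_cw; assumption.
  - apply ray_box_near_rotate_cw; assumption.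
  - apply ray_box_far_rotate_cw; assumption.
Qed.

Theorem theorem4 (k : nat) (P : list pt) (e : pt)
  (tl1 tl2 tu1 tu2 : R) :
  (1 <= k <= 4)%nat ->
  P <> nil ->
  (forall p, In p P -> in_quadrant k p) ->
  in_quadrant k e ->
  (theta e > theta_ub P \/ theta e < theta_lb P) ->
  ray_box_near P (theta_lb P) tl1 ->
  ray_box_far P (theta_lb P) tl2 ->
  ray_box_near P (theta_ub P) tu1 ->
  ray_box_far P (theta_ub P) tu2 ->
  let l1 := ray_pt (theta_lb P) tl1 in
  let l2 := ray_pt (theta_lb P) tl2 in
  let u1 := ray_pt (theta_ub P) tu1 in
  let u2 := ray_pt (theta_ub P) tu2 in
  let cn := c_near k P in
  let cf := c_far k P in
  let D := if Rlt_dec (norm e) (norm cf) then dist_seg cn e else dist_seg cf e in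
  Rmax (Rmax (Rmin (dist_seg l1 e) (dist_seg l2 e))
             (Rmin (dist_seg u1 e) (dist_seg u2 e))) D <= dmax P e
  /\
  dmax P e <= Rmax (Rmax (Rmax (dist_seg l1 e) (dist_seg l2 e))
                         (Rmax (dist_seg u1 e) (dist_seg u2 e)))
                   (dist_seg cf e).
Proof.
  intros Hk.
  assert (H2 := bqs_bounds_rotate_cw 1 ltac:(lia) bqs_bounds_q1).
  assert (H3 := bqs_bounds_rotate_cw 2 ltac:(lia) H2).
  assert (H4 := bqs_bounds_rotate_cw 3 ltac:(lia) H3).
  destruct k as [|[|[|[|[|k]]]]]; try lia.
  - exact (bqs_bounds_q1 P e tl1 tl2 tu1 tu2 Hk).
  - exact (H2 P e tl1 tl2 tu1 tu2 Hk).
  - exact (H3 P e tl1 tl2 tu1 tu2 Hk).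
  - exact (H4 P e tl1 tl2 tu1 tu2 Hk).
Qed.
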